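(* Let $s,t_1,\dots,t_n\in\mathbb{R}^2$ be distinct points, with $T=\{t_1,\dots,t_n\}$ ordered so that $D_{st_1}\le\dots\le D_{st_n}$. Let $P_s>0$, $N_0>0$, $\gamma\in(0,\infty)$, $P_r=\gamma P_s$, $\alpha\ge2$. Let $r^\circ$ be the point on the segment $[s,t_n]$ with $D_{sr^\circ}=\dfrac{D_{st_n}}{1+\sqrt[\alpha]{\gamma}}$, and let $C_s$ be the closed disk centered at $s$ of radius $D_{sr^\circ}$ and $C_r$ the closed disk centered at $r^\circ$ of radius $D_{r^\circ t_n}$. If $T\subseteq C_s\cup C_r$, then $r^\circ$ maximizes the multicast rate $R^*_{sT}(r)$ over all relay positions $r\in\mathbb{R}^2\setminus(\{s\}\cup T)$ (where $r^\circ$ itself is assumed not to lie in $T$).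
   Context: $D_{uv}$ is Euclidean distance. Achievable low-SNR broadcast-relay hypergraph model: for a relay position $r\notin\{s\}\cup T$, the node set is $\mathcal{N}=\{s,r\}\cup T$. The hyperarcs are $(s,J)$ for nonempty $J\subseteq\{r\}\cup T$ and $(r,J)$ for nonempty $J\subseteq T$. A power allocation assigns $P_{sJ}\ge0$, $P_{rJ}\ge0$ with $\sum_J P_{sJ}\le P_s$ and $\sum_J P_{rJ}\le P_r$; the capacity of hyperarc $(i,J)$ is $c_{iJ}=P_{iJ}/(N_0\max_{j\in J}D_{ij}^{\alpha})$. For a receiver $t\in T$, $R_{st}$ is the minimum, over all $S\subseteq\mathcal{N}$ with $s\in S$, $t\notin S$, of $\sum c_{iJ}$ over hyperarcs with $i\in S$ and $J\not\subseteq S$. The multicast rate is $R_{sT}=\min_{t\in T}R_{st}$, and $R^*_{sT}(r)$ is its maximum over all power allocations. *)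

From Stdlib Require Import Reals List Bool.
Import ListNotations.
Open Scope R_scope.

Definition pt : Type := (R * R)%type.

Definition Dpt (p q : pt) : R :=
  sqrt ((fst p - fst q) ^ 2 + (snd p - snd q) ^ 2).

(* Subsets of the terminal set T = {t_0,...,t_{n-1}} are encoded as boolean
   masks of length n: terminal k belongs to the subset iff [nth k m false]. *)
Fixpoint masks (n : nat) : list (list bool) :=
  match n with
  | O => [nil]
  | S n' => map (cons true) (masks n') ++ map (cons false) (masks n')
  end.

Definition memb (m : list bool) (k : nat) : bool := nth k m false.

Definition nonemptyb (m : list bool) : bool := existsb (fun b => b) m.

(* Source hyperarcs (s,J), J a nonempty subset of {r} ∪ T, encoded as
   (b, m): b = (r ∈ J), m = mask of J ∩ T. *)
Definition src_arcs (n : nat) : list (bool * list bool) :=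
  filter (fun p => fst p || nonemptyb (snd p)) (list_prod [true; false] (masks n)).

(* Relay hyperarcs (r,J), J a nonempty subset of T. *)
Definition rel_arcs (n : nat) : list (list bool) :=
  filter nonemptyb (masks n).

Definition sumR (l : list R) : R := fold_right Rplus 0 l.
Definition maxR (l : list R) : R := fold_right Rmax 0 l.
Definition list_min (l : list R) : R :=
  match l with nil => 0 | x :: l' => fold_right Rmin x l' end.

Section Model.
Variables (n : nat) (s : pt) (t : nat -> pt) (r : pt) (N0 alpha : R).

Definition src_maxpow (a : bool * list bool) : R :=
  maxR ((if fst a then [Rpower (Dpt s r) alpha] else [])
        ++ map (fun k => Rpower (Dpt s (t k)) alpha)
               (filter (memb (snd a)) (seq 0 n))).

Definition rel_maxpow (m : list bool) : R :=
  maxR (map (fun k => Rpower (Dpt r (t k)) alpha) (filter (memb m) (seq 0 n))).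

Variables (PS : bool -> list bool -> R) (PR : list bool -> R).

Definition cap_src (a : bool * list bool) : R :=
  PS (fst a) (snd a) / (N0 * src_maxpow a).
Definition cap_rel (m : list bool) : R := PR m / (N0 * rel_maxpow m).

(* A cut S ⊆ N with s ∈ S is encoded by (br, ms): br = (r ∈ S),
   ms = mask of S ∩ T.  Hyperarc (i,J) crosses iff i ∈ S and J ⊄ S. *)
Definition outside_T (ms m : list bool) : bool :=
  existsb (fun k => memb m k && negb (memb ms k)) (seq 0 n).

Definition cut_value (c : bool * list bool) : R :=
  let br := fst c in let ms := snd c in
  sumR (map cap_src
         (filter (fun a => (fst a && negb br) || outside_T ms (snd a)) (src_arcs n)))
  + (if br then sumR (map cap_rel (filter (outside_T ms) (rel_arcs n))) else 0).

Definition cuts_for (k : nat) : list (bool * list bool) :=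
  list_prod [true; false] (filter (fun ms => negb (memb ms k)) (masks n)).

Definition R_st (k : nat) : R := list_min (map cut_value (cuts_for k)).

Definition R_sT : R := list_min (map R_st (seq 0 n)).

End Model.

Definition feasible (n : nat) (Ps Pr : R) (PS : bool -> list bool -> R)
  (PR : list bool -> R) : Prop :=
  (forall a, In a (src_arcs n) -> 0 <= PS (fst a) (snd a)) /\
  sumR (map (fun a => PS (fst a) (snd a)) (src_arcs n)) <= Ps /\
  (forall m, In m (rel_arcs n) -> 0 <= PR m) /\
  sumR (map PR (rel_arcs n)) <= Pr.

From Stdlib Require Import Reals List Lra Lia Bool FinFun.
From Coquelicot Require Derive Rbar.
Import ListNotations.
Open Scope R_scope.

(* Write D = D_{s t_n}, g = gamma^(1/alpha), so that the relay power is g^alpha Ps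
   and D_{s r0} = D/(1+g), D_{r0 t_n} = g D_{s r0}.

   Upper bound (any relay r, any allocation): consider the two cuts separating
   t_n, namely {s} ∪ T\{t_n} with the relay on either side.  If A is the source
   power on arcs reaching t_n and B the power on arcs reaching r but not t_n, the
   cut values are at most (A/D^a + g^a Ps/y^a)/N0 and (A/D^a + B/x^a)/N0 with
   x = D_{sr}, y = D_{r t_n}, x + y >= D.  A purely real inequality (two_cut_bound,
   resting on the monotonicity of (g+v)^a - v^a) shows that one of them is at most
   Ps/(N0 (D/(1+g))^a) = Ps/(N0 D_{s r0}^a).

   Lower bound (at r0): the source sends all its power on the hyperarc to the relay
   and the terminals of C_s, the relay all its power on the hyperarc to the other
   terminals, which lie in C_r.  Every cut is crossed by one of these two arcs,
   both of capacity at least Ps/(N0 D_{s r0}^a). *)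

Lemma Rpower_pos x a : 0 < Rpower x a.
Proof. unfold Rpower; apply exp_pos. Qed.

Lemma Rpower_base_1 a : Rpower 1 a = 1.
Proof. unfold Rpower; rewrite ln_1, Rmult_0_r; apply exp_0. Qed.

(* For a > 1 the gap (g + v)^a - v^a is strictly increasing in v > 0: its
   derivative a ((g + v)^(a-1) - v^(a-1)) is positive. *)
Lemma power_gap_increasing g a v w : 0 < g -> 1 < a -> 0 < v -> v < w ->
  Rpower (g + v) a - Rpower v a < Rpower (g + w) a - Rpower w a.
Proof.
  intros Hg Ha Hv Hvw.
  apply (Derive.incr_function (fun v => Rpower (g + v) a - Rpower v a)
           (Rbar.Finite 0) Rbar.p_infty
           (fun v => a * Rpower (g + v) (a - 1) - a * Rpower v (a - 1)));
    simpl; try lra.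
  - intros x Hx _. apply Derive.is_derive_Reals, derivable_pt_lim_minus.
    + rewrite <- (Rmult_1_r (a * Rpower (g + x) (a - 1))).
      apply (derivable_pt_lim_comp (fun x => g + x) (fun y => Rpower y a)).
      * rewrite <- (Rplus_0_l 1).
        apply derivable_pt_lim_plus; [apply derivable_pt_lim_const|apply derivable_pt_lim_id].
      * apply derivable_pt_lim_power; lra.
    + apply derivable_pt_lim_power; lra.
  - intros x Hx _. apply Rlt_0_minus, Rmult_lt_compat_l; [lra|].
    apply Rlt_Rpower_l; lra.
Qed.

(* The gap inequality rescaled by v = g t / (1 - t): for 0 < t < 1/(1+g),
   (1 - t^a) g^a <= ((1+g)^a - 1) (1 - t)^a. *)
Lemma power_gap_bound g a t : 0 < g -> 1 < a -> 0 < t -> t * (1 + g) < 1 ->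
  (1 - Rpower t a) * Rpower g a <= (Rpower (1 + g) a - 1) * Rpower (1 - t) a.
Proof.
  intros Hg Ha Ht Htg.
  assert (H1t : 0 < 1 - t) by nra.
  set (v := g * t / (1 - t)).
  assert (Hv : 0 < v) by (unfold v; apply Rdiv_lt_0_compat; nra).
  assert (Hv1 : v < 1).
  { apply Rmult_lt_reg_r with (1 - t); auto. unfold v; field_simplify; lra. }
  pose proof (power_gap_increasing g a v 1 Hg Ha Hv Hv1) as Hgap.
  rewrite Rpower_base_1, (Rplus_comm g 1) in Hgap.
  (* multiply through by (1 - t)^a, using (x / (1 - t))^a (1 - t)^a = x^a *)
  assert (Hscale : forall x, 0 < x -> Rpower (x / (1 - t)) a * Rpower (1 - t) a = Rpower x a).
  { intros x Hx. rewrite Rpower_mult_distr by (try apply Rdiv_lt_0_compat; lra).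
    f_equal. field. lra. }
  replace (g + v) with (g / (1 - t)) in Hgap by (unfold v; field; lra).
  apply Rmult_lt_compat_r with (r := Rpower (1 - t) a) in Hgap; [|apply Rpower_pos].
  rewrite Rmult_minus_distr_r, Hscale in Hgap by lra.
  unfold v in Hgap. rewrite Hscale in Hgap by nra.
  rewrite <- Rpower_mult_distr in Hgap by lra.
  lra.
Qed.

Lemma div_le_compat_l x y1 y2 : 0 <= x -> 0 < y1 -> y1 <= y2 -> x / y2 <= x / y1.
Proof.
  intros. unfold Rdiv. apply Rmult_le_compat_l; auto. apply Rinv_le_contravar; auto.
Qed.

Lemma div_one_plus_le D g : 0 <= D -> 0 <= g -> D / (1 + g) <= D.
Proof.
  intros. unfold Rdiv. rewrite <- (Rmult_1_r D) at 2. apply Rmult_le_compat_l; [lra|].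
  rewrite <- Rinv_1. apply Rinv_le_contravar; lra.
Qed.

Lemma Rpower_lt_1 u a : 0 < a -> 0 < u < 1 -> Rpower u a < 1.
Proof. intros. rewrite <- (Rpower_base_1 a). apply Rlt_Rpower_l; lra. Qed.

Lemma far_relay_cut_bound D x g a A B Ps :
  0 < D -> 0 < g -> 0 < a -> D / (1 + g) <= x ->
  0 <= A -> 0 <= B -> A + B <= Ps ->
  A / Rpower D a + B / Rpower x a <= Ps / Rpower (D / (1 + g)) a.
Proof.
  intros HD Hg Ha Hx HA HB HAB.
  pose proof (div_one_plus_le D g ltac:(lra) ltac:(lra)) as HdD.
  set (d := D / (1 + g)) in *.
  assert (Hd : 0 < d) by (apply Rdiv_lt_0_compat; lra).
  pose proof (Rpower_pos d a) as Hda.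
  assert (A / Rpower D a <= A / Rpower d a)
    by (apply div_le_compat_l; auto; apply Rle_Rpower_l; [lra|split; lra]).
  assert (B / Rpower x a <= B / Rpower d a)
    by (apply div_le_compat_l; auto; apply Rle_Rpower_l; [lra|split; lra]).
  assert ((A + B) / Rpower d a <= Ps / Rpower d a)
    by (apply Rmult_le_compat_r; [left; apply Rinv_0_lt_compat|]; auto).
  unfold Rdiv in *; lra.
Qed.

Lemma relay_term_bound D y g a t Ps :
  0 < D -> 0 < g -> 1 < a -> 0 < t -> t * (1 + g) < 1 -> D * (1 - t) <= y -> 0 <= Ps ->
  (1 - Rpower t a) * (Rpower g a * Ps / Rpower y a)
  <= (Rpower (1 + g) a - 1) * Ps / Rpower D a.
Proof.
  intros HD Hg Ha Ht Htg Hy HPs.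
  pose proof (power_gap_bound g a t Hg Ha Ht Htg) as Hgap.
  assert (Ht1 : t < 1) by nra.
  pose proof (Rpower_lt_1 t a ltac:(lra) (conj Ht Ht1)) as Hta.
  pose proof (Rpower_pos D a). pose proof (Rpower_pos (1 - t) a). pose proof (Rpower_pos g a).
  assert (Ey : Rpower D a * Rpower (1 - t) a <= Rpower y a).
  { rewrite Rpower_mult_distr by lra. apply Rle_Rpower_l; [lra|]. split; nra. }
  apply Rle_trans with ((1 - Rpower t a) * Rpower g a * Ps / (Rpower D a * Rpower (1 - t) a)).
  - replace ((1 - Rpower t a) * (Rpower g a * Ps / Rpower y a))
      with ((1 - Rpower t a) * Rpower g a * Ps / Rpower y a)
      by (field; apply Rgt_not_eq, Rpower_pos).
    apply div_le_compat_l; [|nra|exact Ey].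
    apply Rmult_le_pos; [apply Rmult_le_pos|]; lra.
  - apply Rmult_le_reg_r with (Rpower D a * Rpower (1 - t) a); [nra|].
    unfold Rdiv. field_simplify; try lra.
    pose proof (Rmult_le_compat_r Ps _ _ HPs Hgap). lra.
Qed.

(* Relay close to the source (x < D/(1+g), with x + y >= D): with weight
   theta = (x/D)^a, the convex combination of the two cut values
   (A/D^a + g^a Ps/y^a) and (A/D^a + B/x^a) is at most Ps / (D/(1+g))^a. *)
Lemma near_relay_cut_bound D x y g a A B Ps :
  0 < D -> 0 < x -> 0 < g -> 1 < a -> x < D / (1 + g) -> D <= x + y ->
  0 <= A -> 0 <= B -> A + B <= Ps ->
  let theta := Rpower (x / D) a in
  (1 - theta) * (A / Rpower D a + Rpower g a * Ps / Rpower y a)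
  + theta * (A / Rpower D a + B / Rpower x a) <= Ps / Rpower (D / (1 + g)) a.
Proof.
  intros HD Hx Hg Ha Hnear Hxy HA HB HAB theta.
  assert (Htg : x / D * (1 + g) < 1).
  { apply Rmult_lt_reg_r with (D / (1 + g)); [apply Rdiv_lt_0_compat; lra|].
    replace (x / D * (1 + g) * (D / (1 + g))) with x by (field; lra). lra. }
  assert (Hy : D * (1 - x / D) <= y)
    by (replace (D * (1 - x / D)) with (D - x) by (field; lra); lra).
  assert (Hrelay := relay_term_bound D y g a (x / D) Ps HD Hg Ha
                      ltac:(apply Rdiv_lt_0_compat; lra) Htg Hy ltac:(lra)).
  change (Rpower (x / D) a) with theta in Hrelay.
  pose proof (Rpower_pos D a). pose proof (Rpower_pos (1 + g) a).
  pose proof (Rpower_pos (D / (1 + g)) a). pose proof (Rpower_pos (x / D) a).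
  assert (Ex : Rpower x a = Rpower D a * theta).
  { unfold theta. rewrite Rpower_mult_distr by (try apply Rdiv_lt_0_compat; lra).
    f_equal; field; lra. }
  assert (Ed : Rpower (D / (1 + g)) a = Rpower D a / Rpower (1 + g) a).
  { apply Rmult_eq_reg_r with (Rpower (1 + g) a); [|lra].
    rewrite Rpower_mult_distr by (try apply Rdiv_lt_0_compat; lra).
    replace (D / (1 + g) * (1 + g)) with D by (field; lra). field. lra. }
  rewrite Ex, Ed.
  replace ((1 - theta) * (A / Rpower D a + Rpower g a * Ps / Rpower y a)
           + theta * (A / Rpower D a + B / (Rpower D a * theta)))
    with ((A + B) / Rpower D a + (1 - theta) * (Rpower g a * Ps / Rpower y a))
    by (field; repeat split; try lra; apply Rgt_not_eq, Rpower_pos).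
  replace (Ps / (Rpower D a / Rpower (1 + g) a))
    with (Ps / Rpower D a + (Rpower (1 + g) a - 1) * Ps / Rpower D a) by (field; lra).
  assert ((A + B) / Rpower D a <= Ps / Rpower D a)
    by (apply Rmult_le_compat_r; [left; apply Rinv_0_lt_compat|]; auto).
  lra.
Qed.

Lemma two_cut_bound D x y g a A B Ps :
  0 < D -> 0 < x -> 0 < g -> 1 < a -> D <= x + y ->
  0 <= A -> 0 <= B -> A + B <= Ps ->
  A / Rpower D a + Rpower g a * Ps / Rpower y a <= Ps / Rpower (D / (1 + g)) a \/
  A / Rpower D a + B / Rpower x a <= Ps / Rpower (D / (1 + g)) a.
Proof.
  intros HD Hx Hg Ha Hxy HA HB HAB.
  destruct (Rle_lt_dec (D / (1 + g)) x) as [Hfar|Hnear].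
  - right. apply far_relay_cut_bound; auto; lra.
  - pose proof (near_relay_cut_bound D x y g a A B Ps HD Hx Hg Ha Hnear Hxy HA HB HAB) as Hmix.
    cbv zeta in Hmix.
    pose proof (div_one_plus_le D g ltac:(lra) ltac:(lra)).
    assert (Hratio : 0 < x / D < 1).
    { split; [apply Rdiv_lt_0_compat; lra|].
      apply Rmult_lt_reg_r with D; [lra|]. field_simplify; lra. }
    pose proof (Rpower_pos (x / D) a). pose proof (Rpower_lt_1 (x / D) a ltac:(lra) Hratio).
    (* a convex combination bounded by c forces one of its two terms below c *)
    destruct (Rle_lt_dec (A / Rpower D a + Rpower g a * Ps / Rpower y a)
                (Ps / Rpower (D / (1 + g)) a)); [left|right]; nra.
Qed.

Lemma Dpt_pos p q : p <> q -> 0 < Dpt p q.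
Proof.
  intros H. unfold Dpt. apply sqrt_lt_R0.
  destruct p as [p1 p2], q as [q1 q2]; simpl.
  pose proof (pow2_ge_0 (p1 - q1)). pose proof (pow2_ge_0 (p2 - q2)).
  destruct (Req_dec p1 q1) as [E1|E1]; [destruct (Req_dec p2 q2) as [E2|E2]|].
  - subst; contradiction.
  - pose proof (Rsqr_pos_lt (p2 - q2) ltac:(lra)). unfold Rsqr in *. lra.
  - pose proof (Rsqr_pos_lt (p1 - q1) ltac:(lra)). unfold Rsqr in *. lra.
Qed.

Lemma Dpt_triangle p q w : Dpt p w <= Dpt p q + Dpt q w.
Proof.
  unfold Dpt.
  set (u1 := fst p - fst q). set (w1 := snd p - snd q).
  set (u2 := fst q - fst w). set (w2 := snd q - snd w).
  replace (fst p - fst w) with (u1 + u2) by (unfold u1, u2; ring).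
  replace (snd p - snd w) with (w1 + w2) by (unfold w1, w2; ring).
  pose proof (sqrt_cauchy u1 w1 u2 w2) as Hcs. unfold Rsqr in Hcs.
  assert (H1 : 0 <= u1 ^ 2 + w1 ^ 2) by nra.
  assert (H2 : 0 <= u2 ^ 2 + w2 ^ 2) by nra.
  replace (u1 * u1 + w1 * w1) with (u1 ^ 2 + w1 ^ 2) in Hcs by ring.
  replace (u2 * u2 + w2 * w2) with (u2 ^ 2 + w2 ^ 2) in Hcs by ring.
  pose proof (sqrt_sqrt _ H1). pose proof (sqrt_sqrt _ H2).
  pose proof (sqrt_pos (u1 ^ 2 + w1 ^ 2)). pose proof (sqrt_pos (u2 ^ 2 + w2 ^ 2)).
  set (S1 := sqrt (u1 ^ 2 + w1 ^ 2)) in *. set (S2 := sqrt (u2 ^ 2 + w2 ^ 2)) in *.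
  rewrite <- (sqrt_square (S1 + S2)) by lra.
  apply sqrt_le_1_alt. nra.
Qed.

Lemma Dpt_on_segment s q lam : 0 <= lam <= 1 ->
  let p := (fst s + lam * (fst q - fst s), snd s + lam * (snd q - snd s)) in
  Dpt s p = lam * Dpt s q /\ Dpt p q = (1 - lam) * Dpt s q.
Proof.
  intros Hl p. unfold p, Dpt; cbn [fst snd].
  set (Q := (fst s - fst q) ^ 2 + (snd s - snd q) ^ 2).
  assert (HQ : 0 <= Q) by (unfold Q; apply Rplus_le_le_0_compat; apply pow2_ge_0).
  split.
  - replace ((fst s - (fst s + lam * (fst q - fst s))) ^ 2 +
             (snd s - (snd s + lam * (snd q - snd s))) ^ 2) with ((lam * lam) * Q)
      by (unfold Q; ring).
    rewrite sqrt_mult, sqrt_square by nra. reflexivity.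
  - replace ((fst s + lam * (fst q - fst s) - fst q) ^ 2 +
             (snd s + lam * (snd q - snd s) - snd q) ^ 2) with (((1 - lam) * (1 - lam)) * Q)
      by (unfold Q; ring).
    rewrite sqrt_mult, sqrt_square by nra. reflexivity.
Qed.

Lemma sumR_le {A} (f g : A -> R) l :
  (forall x, In x l -> f x <= g x) -> sumR (map f l) <= sumR (map g l).
Proof.
  induction l as [|a l IH]; simpl; intros H; [lra|].
  pose proof (H a (or_introl eq_refl)). pose proof (IH (fun x Hx => H x (or_intror Hx))). lra.
Qed.

Lemma sumR_nonneg {A} (f : A -> R) l :
  (forall x, In x l -> 0 <= f x) -> 0 <= sumR (map f l).
Proof.
  induction l as [|a l IH]; simpl; intros H; [lra|].
  pose proof (H a (or_introl eq_refl)). pose proof (IH (fun x Hx => H x (or_intror Hx))). lra.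
Qed.

Lemma sumR_plus {A} (f g : A -> R) l :
  sumR (map (fun x => f x + g x) l) = sumR (map f l) + sumR (map g l).
Proof. induction l as [|a l IH]; simpl; [ring|]. rewrite IH; ring. Qed.

Lemma sumR_div {A} (f : A -> R) c l :
  sumR (map (fun x => f x / c) l) = sumR (map f l) / c.
Proof. induction l as [|a l IH]; simpl; unfold Rdiv in *; [ring|]. rewrite IH; ring. Qed.

Lemma sumR_filter_le {A} (p : A -> bool) (f g : A -> R) l :
  (forall x, In x l -> p x = true -> f x <= g x) -> (forall x, In x l -> 0 <= g x) ->
  sumR (map f (filter p l)) <= sumR (map g l).
Proof.
  induction l as [|a l IH]; simpl; intros Hfg Hg; [lra|].
  assert (IH' := IH (fun x Hx => Hfg x (or_intror Hx)) (fun x Hx => Hg x (or_intror Hx))).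
  pose proof (Hg a (or_introl eq_refl)).
  destruct (p a) eqn:Hp; simpl; [pose proof (Hfg a (or_introl eq_refl) Hp)|]; lra.
Qed.

Lemma sumR_ge_term {A} (f : A -> R) l x0 :
  (forall x, In x l -> 0 <= f x) -> In x0 l -> f x0 <= sumR (map f l).
Proof.
  induction l as [|a l IH]; simpl; intros H Hin; [contradiction|].
  pose proof (sumR_nonneg f l (fun x Hx => H x (or_intror Hx))).
  pose proof (H a (or_introl eq_refl)).
  destruct Hin as [<-|Hin]; [lra|].
  pose proof (IH (fun x Hx => H x (or_intror Hx)) Hin). lra.
Qed.

Lemma sumR_indicator_le {A} (dec : forall x y : A, {x = y} + {x <> y}) l a0 c :
  NoDup l -> 0 <= c -> sumR (map (fun x => if dec x a0 then c else 0) l) <= c.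
Proof.
  intros ND Hc. induction ND as [|a l Hna ND IH]; simpl; [lra|].
  destruct (dec a a0) as [->|]; [|lra].
  enough (sumR (map (fun x => if dec x a0 then c else 0) l) = 0) by lra.
  clear IH ND. induction l as [|b l IHl]; simpl; auto.
  destruct (dec b a0) as [->|]; [exfalso; apply Hna; simpl; auto|].
  rewrite IHl; [ring|]. intro; apply Hna; simpl; auto.
Qed.

Lemma list_min_le l x : In x l -> list_min l <= x.
Proof.
  destruct l as [|a l]; simpl; [tauto|]. revert x.
  induction l as [|b l IH]; simpl; intros x Hx; [destruct Hx as [<-|[]]; lra|].
  destruct Hx as [<-|[<-|Hx]].
  - pose proof (IH a (or_introl eq_refl)). pose proof (Rmin_r b (fold_right Rmin a l)). lra.
  - apply Rmin_l.
  - pose proof (IH x (or_intror Hx)). pose proof (Rmin_r b (fold_right Rmin a l)). lra.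
Qed.

Lemma list_min_ge l c : l <> nil -> (forall x, In x l -> c <= x) -> c <= list_min l.
Proof.
  destruct l as [|a l]; [tauto|]. intros _ H. simpl.
  assert (Ha : c <= a) by (apply H; simpl; auto).
  assert (Hl : forall x, In x l -> c <= x) by (intros; apply H; simpl; auto).
  clear H. induction l as [|b l IH]; simpl; auto.
  apply Rmin_glb; [apply Hl; simpl; auto|]. apply IH. intros; apply Hl; simpl; auto.
Qed.

Lemma maxR_ge l x : In x l -> x <= maxR l.
Proof.
  induction l as [|a l IH]; simpl; [tauto|]. intros [<-|H]; [apply Rmax_l|].
  pose proof (IH H). pose proof (Rmax_r a (maxR l)). lra.
Qed.

Lemma maxR_le l c : 0 <= c -> (forall x, In x l -> x <= c) -> maxR l <= c.
Proof.
  induction l as [|a l IH]; simpl; intros Hc H; [lra|].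
  apply Rmax_lub; auto.
Qed.

Lemma maxR_nonneg l : 0 <= maxR l.
Proof. induction l; simpl; [lra|]. pose proof (Rmax_r a (maxR l)). lra. Qed.

Lemma masks_complete m n : length m = n -> In m (masks n).
Proof.
  revert n; induction m as [|b m IH]; intros n Hn; simpl in Hn; subst; simpl; auto.
  apply in_or_app. destruct b; [left|right]; apply in_map; auto.
Qed.

Lemma masks_NoDup n : NoDup (masks n).
Proof.
  induction n; simpl; [constructor; auto; constructor|].
  apply NoDup_app; try (apply Injective_map_NoDup; auto; intros x y H; injection H; auto).
  intros a H1 H2. apply in_map_iff in H1, H2.
  destruct H1 as [x [<- _]], H2 as [y [E _]]. discriminate.
Qed.

Lemma src_arcs_NoDup n : NoDup (src_arcs n).
Proof.
  unfold src_arcs. apply NoDup_filter. simpl. rewrite app_nil_r.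
  pose proof (masks_NoDup n).
  apply NoDup_app; try (apply Injective_map_NoDup; auto; intros x y H'; injection H'; auto).
  intros a H1 H2. apply in_map_iff in H1, H2.
  destruct H1 as [x [<- _]], H2 as [y [E _]]. discriminate.
Qed.

Lemma rel_arcs_NoDup n : NoDup (rel_arcs n).
Proof. apply NoDup_filter, masks_NoDup. Qed.

Lemma memb_map_seq (f : nat -> bool) n k : (k < n)%nat -> memb (map f (seq 0 n)) k = f k.
Proof.
  intros H. unfold memb.
  rewrite nth_indep with (d' := f 0%nat) by (rewrite length_map, length_seq; auto).
  rewrite map_nth, seq_nth; auto.
Qed.

Lemma length_map_seq (f : nat -> bool) n : length (map f (seq 0 n)) = n.
Proof. rewrite length_map, length_seq; auto. Qed.

Lemma outside_T_intro n ms m k : (k < n)%nat -> memb m k = true -> memb ms k = false ->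
  outside_T n ms m = true.
Proof.
  intros Hk H1 H2. unfold outside_T. apply existsb_exists. exists k.
  rewrite in_seq, H1, H2. split; [lia|auto].
Qed.

Lemma memb_nonempty m k : memb m k = true -> nonemptyb m = true.
Proof.
  unfold memb, nonemptyb. intros H. apply existsb_exists. exists true. split; auto.
  destruct (Nat.lt_ge_cases k (length m)).
  - rewrite <- H. apply nth_In; auto.
  - rewrite nth_overflow in H; auto; discriminate.
Qed.

Lemma src_arcs_In n b m : length m = n -> b || nonemptyb m = true -> In (b, m) (src_arcs n).
Proof.
  intros Hl Hb. unfold src_arcs. apply filter_In. split; auto.
  apply in_prod; [destruct b; simpl; auto|apply masks_complete; auto].
Qed.

Lemma rel_arcs_In n m k : length m = n -> memb m k = true -> In m (rel_arcs n).
Proof.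
  intros Hl Hk. apply filter_In. split; [apply masks_complete; auto|eapply memb_nonempty; eauto].
Qed.

Section Rates.
Variables (n : nat) (s : pt) (t : nat -> pt) (r : pt) (N0 alpha : R).
Variables (PS : bool -> list bool -> R) (PR : list bool -> R).

Lemma rate_le_cut k b ms : (k < n)%nat -> length ms = n -> memb ms k = false ->
  R_sT n s t r N0 alpha PS PR <= cut_value n s t r N0 alpha PS PR (b, ms).
Proof.
  intros Hk Hl Hms.
  apply Rle_trans with (R_st n s t r N0 alpha PS PR k).
  - apply list_min_le, in_map, in_seq. lia.
  - apply list_min_le, in_map, in_prod; [destruct b; simpl; auto|].
    apply filter_In. rewrite Hms. split; [apply masks_complete|]; auto.
Qed.

Lemma rate_ge_of_cuts c : (1 <= n)%nat ->
  (forall k b ms, (k < n)%nat -> memb ms k = false -> c <= cut_value n s t r N0 alpha PS PR (b, ms)) ->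
  c <= R_sT n s t r N0 alpha PS PR.
Proof.
  intros Hn Hcut. apply list_min_ge.
  { destruct n; [lia|]. discriminate. }
  intros x Hx. apply in_map_iff in Hx. destruct Hx as [k [<- Hk]]. apply in_seq in Hk.
  apply list_min_ge.
  - assert (Hall : In (false, repeat false n) (cuts_for n k)).
    { apply in_prod; [simpl; auto|]. apply filter_In.
      split; [apply masks_complete, repeat_length|]. unfold memb. rewrite nth_repeat. auto. }
    intro E. apply (in_map (cut_value n s t r N0 alpha PS PR)) in Hall.
    rewrite E in Hall. contradiction.
  - intros x Hx. apply in_map_iff in Hx. destruct Hx as [[b ms] [<- Hc]].
    apply in_prod_iff in Hc. destruct Hc as [_ Hc]. apply filter_In in Hc.
    apply (Hcut k); [lia|]. apply negb_true_iff, Hc.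
Qed.

Lemma src_maxpow_ge_terminal a k : (k < n)%nat -> memb (snd a) k = true ->
  Rpower (Dpt s (t k)) alpha <= src_maxpow n s t r alpha a.
Proof.
  intros Hk Ha. apply maxR_ge, in_or_app. right.
  apply in_map_iff. exists k. rewrite filter_In, in_seq. split; [|split; [lia|]]; auto.
Qed.

Lemma src_maxpow_ge_relay a : fst a = true ->
  Rpower (Dpt s r) alpha <= src_maxpow n s t r alpha a.
Proof. intros Ha. apply maxR_ge, in_or_app. left. rewrite Ha. simpl; auto. Qed.

Lemma rel_maxpow_ge_terminal m k : (k < n)%nat -> memb m k = true ->
  Rpower (Dpt r (t k)) alpha <= rel_maxpow n t r alpha m.
Proof.
  intros Hk Hm. apply maxR_ge, in_map_iff. exists k.
  rewrite filter_In, in_seq. split; [|split; [lia|]]; auto.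
Qed.

End Rates.

(* Capacities decrease as the normalising maximum grows, and are nonnegative
   (Rdiv by 0 is 0). *)
Lemma cap_antitone P N0 m M : 0 <= P -> 0 < N0 -> 0 < m -> m <= M ->
  P / (N0 * M) <= P / (N0 * m).
Proof. intros. apply div_le_compat_l; auto; nra. Qed.

Lemma cap_nonneg P N0 M : 0 <= P -> 0 < N0 -> 0 <= M -> 0 <= P / (N0 * M).
Proof.
  intros HP HN [HM|<-].
  - apply Rmult_le_pos; [lra|left; apply Rinv_0_lt_compat; nra].
  - rewrite Rmult_0_r. unfold Rdiv. rewrite Rinv_0. lra.
Qed.

Definition all_but (n k : nat) : list bool := map (fun j => negb (Nat.eqb j k)) (seq 0 n).

Lemma all_but_length n k : length (all_but n k) = n.
Proof. apply length_map_seq. Qed.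

Lemma all_but_excludes n k : (k < n)%nat -> memb (all_but n k) k = false.
Proof. intros Hk. unfold all_but. rewrite memb_map_seq, Nat.eqb_refl; auto. Qed.

Lemma all_but_crossing n k m : outside_T n (all_but n k) m = true -> memb m k = true.
Proof.
  unfold outside_T. intros Hx. apply existsb_exists in Hx.
  destruct Hx as [j [Hj Hb]]. apply in_seq in Hj. apply andb_prop in Hb.
  destruct Hb as [Hm Hj']. unfold all_but in Hj'. rewrite memb_map_seq in Hj' by lia.
  destruct (Nat.eqb_spec j k); [subst; auto|discriminate].
Qed.

Definition pow_to_terminal (k : nat) (PS : bool -> list bool -> R) (a : bool * list bool) : R :=
  if memb (snd a) k then PS (fst a) (snd a) else 0.

Definition pow_to_relay_only (k : nat) (PS : bool -> list bool -> R) (a : bool * list bool) : R :=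
  if memb (snd a) k then 0 else if fst a then PS (fst a) (snd a) else 0.

Section CutsAroundTerminal.
Variables (n : nat) (s : pt) (t : nat -> pt) (r : pt) (N0 alpha : R).
Variables (PS : bool -> list bool -> R) (PR : list bool -> R) (k : nat).
Hypothesis Hk : (k < n)%nat.
Hypothesis HN0 : 0 < N0.
Hypothesis HPS : forall a, In a (src_arcs n) -> 0 <= PS (fst a) (snd a).
Hypothesis HPR : forall m, In m (rel_arcs n) -> 0 <= PR m.

Let Dk := Rpower (Dpt s (t k)) alpha.
Let Dr := Rpower (Dpt s r) alpha.
Let Drk := Rpower (Dpt r (t k)) alpha.

Lemma pow_to_terminal_nonneg a : In a (src_arcs n) -> 0 <= pow_to_terminal k PS a.
Proof.
  intros Ha. pose proof (HPS a Ha). unfold pow_to_terminal. destruct (memb (snd a) k); lra.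
Qed.

Lemma pow_to_relay_only_nonneg a : In a (src_arcs n) -> 0 <= pow_to_relay_only k PS a.
Proof.
  intros Ha. pose proof (HPS a Ha). unfold pow_to_relay_only.
  destruct (memb (snd a) k), (fst a); lra.
Qed.

Lemma pow_split_le a : In a (src_arcs n) ->
  pow_to_terminal k PS a + pow_to_relay_only k PS a <= PS (fst a) (snd a).
Proof.
  intros Ha. pose proof (HPS a Ha). unfold pow_to_terminal, pow_to_relay_only.
  destruct (memb (snd a) k), (fst a); lra.
Qed.

(* Cut {s, r} ∪ T \ {t_k}: only arcs reaching t_k cross, from s and from r. *)
Lemma cut_relay_in_le :
  cut_value n s t r N0 alpha PS PR (true, all_but n k)
  <= sumR (map (pow_to_terminal k PS) (src_arcs n)) / (N0 * Dk)
     + sumR (map PR (rel_arcs n)) / (N0 * Drk).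
Proof.
  unfold cut_value; cbn [fst snd]. rewrite <- !sumR_div.
  apply Rplus_le_compat; apply sumR_filter_le.
  - intros a Ha Hx. rewrite andb_false_r in Hx. apply all_but_crossing in Hx.
    unfold cap_src, pow_to_terminal. rewrite Hx.
    apply cap_antitone; auto; [apply Rpower_pos|]. apply src_maxpow_ge_terminal; auto.
  - intros a Ha. apply cap_nonneg; [apply pow_to_terminal_nonneg|..]; auto.
    left; apply Rpower_pos.
  - intros m Hm Hx. apply all_but_crossing in Hx.
    apply cap_antitone; auto; [apply Rpower_pos|]. apply rel_maxpow_ge_terminal; auto.
  - intros m Hm. apply cap_nonneg; auto. left; apply Rpower_pos.
Qed.

(* Cut {s} ∪ T \ {t_k}: the crossing source arcs reach t_k or the relay. *)
Lemma cut_relay_out_le :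
  cut_value n s t r N0 alpha PS PR (false, all_but n k)
  <= sumR (map (pow_to_terminal k PS) (src_arcs n)) / (N0 * Dk)
     + sumR (map (pow_to_relay_only k PS) (src_arcs n)) / (N0 * Dr).
Proof.
  unfold cut_value; cbn [fst snd]. rewrite Rplus_0_r, <- !sumR_div, <- sumR_plus.
  apply sumR_filter_le.
  - intros [b m] Ha Hx. pose proof (HPS _ Ha).
    unfold cap_src, pow_to_terminal, pow_to_relay_only. cbn [fst snd] in *.
    destruct (memb m k) eqn:Hm.
    + rewrite Rdiv_0_l, Rplus_0_r.
      apply cap_antitone; auto; [apply Rpower_pos|]. apply src_maxpow_ge_terminal; auto.
    + destruct (outside_T n (all_but n k) m) eqn:Ho;
        [rewrite (all_but_crossing _ _ _ Ho) in Hm; discriminate|].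
      rewrite orb_false_r, andb_true_r in Hx. subst b. rewrite Rdiv_0_l, Rplus_0_l.
      apply cap_antitone; auto; [apply Rpower_pos|]. apply src_maxpow_ge_relay; auto.
  - intros a Ha.
    pose proof (pow_to_terminal_nonneg a Ha). pose proof (pow_to_relay_only_nonneg a Ha).
    apply Rplus_le_le_0_compat; apply cap_nonneg; auto; left; apply Rpower_pos.
Qed.

End CutsAroundTerminal.

(* One of the two cuts around t_k is small
   enough, by the two-cut inequality and the triangle inequality. *)
Lemma rate_upper_bound n s t r Ps N0 g alpha PS PR k :
  (k < n)%nat -> t k <> s -> r <> s -> 0 < N0 -> 0 < g -> 1 < alpha ->
  feasible n Ps (Rpower g alpha * Ps) PS PR ->
  R_sT n s t r N0 alpha PS PR <= Ps / (N0 * Rpower (Dpt s (t k) / (1 + g)) alpha).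
Proof.
  intros Hk Hts Hrs HN0 Hg Ha [HPS [HPSs [HPR HPRs]]].
  set (A := sumR (map (pow_to_terminal k PS) (src_arcs n))).
  set (B := sumR (map (pow_to_relay_only k PS) (src_arcs n))).
  assert (HA : 0 <= A) by (apply sumR_nonneg; intros; eapply pow_to_terminal_nonneg; eauto).
  assert (HB : 0 <= B) by (apply sumR_nonneg; intros; eapply pow_to_relay_only_nonneg; eauto).
  assert (HAB : A + B <= Ps).
  { unfold A, B. rewrite <- sumR_plus. eapply Rle_trans; [|exact HPSs].
    apply sumR_le. intros; eapply pow_split_le; eauto. }
  pose proof (Dpt_pos _ _ (not_eq_sym Hts)) as HD.
  pose proof (Dpt_pos _ _ (not_eq_sym Hrs)) as Hx.
  pose proof (Rpower_pos (Dpt r (t k)) alpha) as Hy.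
  pose proof (Rpower_pos (Dpt s (t k) / (1 + g)) alpha) as Hd.
  pose proof (Rpower_pos (Dpt s (t k)) alpha).
  pose proof (Rpower_pos (Dpt s r) alpha).
  assert (Hscale : forall X Y, 0 < Y -> X / (N0 * Y) = X / Y / N0)
    by (intros; field; lra).
  destruct (two_cut_bound _ _ (Dpt r (t k)) _ _ A B Ps HD Hx Hg Ha
              (Dpt_triangle s r (t k)) HA HB HAB) as [Hcut|Hcut].
  - eapply Rle_trans; [apply (rate_le_cut _ _ _ _ _ _ _ _ k true (all_but n k));
                        auto using all_but_length, all_but_excludes|].
    eapply Rle_trans; [apply cut_relay_in_le; auto|].
    assert (sumR (map PR (rel_arcs n)) / (N0 * Rpower (Dpt r (t k)) alpha)
            <= Rpower g alpha * Ps / (N0 * Rpower (Dpt r (t k)) alpha))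
      by (apply Rmult_le_compat_r; [left; apply Rinv_0_lt_compat; nra|auto]).
    rewrite !Hscale in * by auto. fold A.
    apply Rmult_le_compat_r with (r := / N0) in Hcut; [|left; apply Rinv_0_lt_compat; lra].
    unfold Rdiv in *. lra.
  - eapply Rle_trans; [apply (rate_le_cut _ _ _ _ _ _ _ _ k false (all_but n k));
                        auto using all_but_length, all_but_excludes|].
    eapply Rle_trans; [apply cut_relay_out_le; auto|].
    rewrite !Hscale by auto. fold A B.
    apply Rmult_le_compat_r with (r := / N0) in Hcut; [|left; apply Rinv_0_lt_compat; lra].
    unfold Rdiv in *. lra.
Qed.

Definition arc_eq_dec : forall x y : bool * list bool, {x = y} + {x <> y}.
Proof. decide equality; [apply (list_eq_dec bool_dec)|apply bool_dec]. Defined.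

Definition src_point (a0 : bool * list bool) (P : R) : bool -> list bool -> R :=
  fun b m => if arc_eq_dec (b, m) a0 then P else 0.

Definition rel_point (m0 : list bool) (P : R) : list bool -> R :=
  fun m => if list_eq_dec bool_dec m m0 then P else 0.

Lemma src_point_nonneg a0 P b m : 0 <= P -> 0 <= src_point a0 P b m.
Proof. intros. unfold src_point. destruct arc_eq_dec; lra. Qed.

Lemma rel_point_nonneg m0 P m : 0 <= P -> 0 <= rel_point m0 P m.
Proof. intros. unfold rel_point. destruct list_eq_dec; lra. Qed.

Lemma point_feasible n Ps Pr a0 m0 : 0 <= Ps -> 0 <= Pr ->
  feasible n Ps Pr (src_point a0 Ps) (rel_point m0 Pr).
Proof.
  intros HPs HPr. repeat split.
  - intros; apply src_point_nonneg; auto.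
  - replace (map (fun a => src_point a0 Ps (fst a) (snd a)) (src_arcs n))
      with (map (fun a => if arc_eq_dec a a0 then Ps else 0) (src_arcs n))
      by (apply map_ext; intros [b m]; reflexivity).
    apply sumR_indicator_le; auto using src_arcs_NoDup.
  - intros; apply rel_point_nonneg; auto.
  - apply sumR_indicator_le; auto using rel_arcs_NoDup.
Qed.

Section TwoHopRouting.
Variables (n : nat) (s : pt) (t : nat -> pt) (r : pt) (N0 alpha : R).
Variables (PS : bool -> list bool -> R) (PR : list bool -> R).
Hypothesis Hsrc_nonneg : forall a, 0 <= cap_src n s t r N0 alpha PS a.
Hypothesis Hrel_nonneg : forall m, 0 <= cap_rel n t r N0 alpha PR m.

(* Two-hop routing: the source broadcasts on one hyperarc (true, near) reaching the
   relay, and the relay forwards on one hyperarc far covering every terminal not in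
   near. *)
Lemma two_hop_cut_ge near far c k b ms :
  (k < n)%nat -> memb ms k = false ->
  In (true, near) (src_arcs n) -> c <= cap_src n s t r N0 alpha PS (true, near) ->
  (memb near k = false ->
     In far (rel_arcs n) /\ memb far k = true /\ c <= cap_rel n t r N0 alpha PR far) ->
  c <= cut_value n s t r N0 alpha PS PR (b, ms).
Proof.
  intros Hk Hms Hnear Hcnear Hfar. unfold cut_value; cbn [fst snd].
  pose proof (sumR_nonneg (cap_rel n t r N0 alpha PR) (filter (outside_T n ms) (rel_arcs n))
                (fun m _ => Hrel_nonneg m)).
  assert (Hsrc : (if b then outside_T n ms near else true) = true ->
                 c <= sumR (map (cap_src n s t r N0 alpha PS)
                     (filter (fun a => fst a && negb b || outside_T n ms (snd a)) (src_arcs n)))).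
  { intros Hx. eapply Rle_trans; [exact Hcnear|].
    apply sumR_ge_term; [intros; apply Hsrc_nonneg|].
    apply filter_In. split; auto. destruct b; cbn; auto. }
  destruct b; [|pose proof (Hsrc eq_refl); lra].
  pose proof (sumR_nonneg (cap_src n s t r N0 alpha PS)
                (filter (fun a => fst a && negb true || outside_T n ms (snd a)) (src_arcs n))
                (fun a _ => Hsrc_nonneg a)).
  destruct (memb near k) eqn:Hk_near.
  - pose proof (Hsrc (outside_T_intro n ms near k Hk Hk_near Hms)). lra.
  - destruct (Hfar eq_refl) as [Hin [Hk_far Hcfar]].
    enough (c <= sumR (map (cap_rel n t r N0 alpha PR) (filter (outside_T n ms) (rel_arcs n))))
      by lra.
    eapply Rle_trans; [exact Hcfar|].
    apply sumR_ge_term; [intros; apply Hrel_nonneg|].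
    apply filter_In. split; auto. apply (outside_T_intro n ms far k); auto.
Qed.

End TwoHopRouting.

Definition is_near (s : pt) (t : nat -> pt) (r0 : pt) (k : nat) : bool :=
  if Rle_dec (Dpt s (t k)) (Dpt s r0) then true else false.

Definition near_mask (n : nat) (s : pt) (t : nat -> pt) (r0 : pt) : list bool :=
  map (is_near s t r0) (seq 0 n).

Definition far_mask (n : nat) (s : pt) (t : nat -> pt) (r0 : pt) : list bool :=
  map (fun k => negb (is_near s t r0 k)) (seq 0 n).

Section LowerBound.
Variables (n : nat) (s : pt) (t : nat -> pt) (r0 : pt) (alpha rho : R).
Hypothesis Hts : forall k, (k < n)%nat -> t k <> s.
Hypothesis Htr : forall k, (k < n)%nat -> t k <> r0.
Hypothesis Halpha : 0 < alpha.
Hypothesis Hcover : forall k, (k < n)%nat -> Dpt s (t k) <= Dpt s r0 \/ Dpt r0 (t k) <= rho.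

Lemma near_arc_maxpow :
  src_maxpow n s t r0 alpha (true, near_mask n s t r0) <= Rpower (Dpt s r0) alpha.
Proof.
  apply maxR_le; [left; apply Rpower_pos|]. intros x Hx. apply in_app_or in Hx.
  destruct Hx as [[<-|[]]|Hx]; [apply Rle_refl|].
  apply in_map_iff in Hx. destruct Hx as [j [<- Hj]]. apply filter_In in Hj.
  destruct Hj as [Hj Hm]. apply in_seq in Hj. cbn [snd] in Hm.
  unfold near_mask in Hm. rewrite memb_map_seq in Hm by lia. unfold is_near in Hm.
  destruct Rle_dec as [Hle|]; [|discriminate].
  apply Rle_Rpower_l; [lra|]. split; auto. apply Dpt_pos, not_eq_sym, Hts. lia.
Qed.

Lemma far_arc_maxpow :
  rel_maxpow n t r0 alpha (far_mask n s t r0) <= Rpower rho alpha.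
Proof.
  apply maxR_le; [left; apply Rpower_pos|]. intros x Hx.
  apply in_map_iff in Hx. destruct Hx as [j [<- Hj]]. apply filter_In in Hj.
  destruct Hj as [Hj Hm]. apply in_seq in Hj.
  unfold far_mask in Hm. rewrite memb_map_seq in Hm by lia. unfold is_near in Hm.
  destruct Rle_dec as [|Hnle]; [discriminate|].
  destruct (Hcover j) as [Hnear|Hfar]; [lia|contradiction|].
  apply Rle_Rpower_l; [lra|]. split; auto. apply Dpt_pos, not_eq_sym, Htr. lia.
Qed.

Lemma rate_lower_bound Ps N0 gamma :
  (1 <= n)%nat -> 0 <= Ps -> 0 < N0 -> 0 < gamma ->
  Rpower rho alpha = gamma * Rpower (Dpt s r0) alpha ->
  Ps / (N0 * Rpower (Dpt s r0) alpha)
  <= R_sT n s t r0 N0 alpha (src_point (true, near_mask n s t r0) Ps)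
                            (rel_point (far_mask n s t r0) (gamma * Ps)).
Proof.
  intros Hn HPs HN0 Hgamma Hrho.
  set (near := near_mask n s t r0). set (far := far_mask n s t r0).
  pose proof (Rpower_pos (Dpt s r0) alpha) as Hd.
  apply rate_ge_of_cuts; auto. intros k b ms Hk Hms.
  apply two_hop_cut_ge with (near := near) (far := far) (k := k); auto.
  - intros a. apply cap_nonneg; [apply src_point_nonneg; lra|lra|apply maxR_nonneg].
  - intros m. apply cap_nonneg; [apply rel_point_nonneg; nra|lra|apply maxR_nonneg].
  - apply src_arcs_In; auto. apply length_map_seq.
  - unfold cap_src, src_point; cbn [fst snd].
    destruct arc_eq_dec as [_|Hne]; [|contradiction].
    apply cap_antitone; auto; [|apply near_arc_maxpow].
    eapply Rlt_le_trans; [apply Hd|]. apply src_maxpow_ge_relay; auto.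
  - intros Hk_near.
    assert (Hk_far : memb far k = true).
    { unfold far, near, near_mask, far_mask in *. rewrite memb_map_seq in * by auto.
      rewrite Hk_near. reflexivity. }
    split; [apply (rel_arcs_In n far k); auto; apply length_map_seq|]. split; auto.
    unfold cap_rel, rel_point. destruct list_eq_dec as [_|Hne]; [|contradiction].
    replace (Ps / (N0 * Rpower (Dpt s r0) alpha))
      with (gamma * Ps / (N0 * Rpower rho alpha)) by (rewrite Hrho; field; lra).
    apply cap_antitone; [nra|auto| |apply far_arc_maxpow].
    eapply Rlt_le_trans; [apply (Rpower_pos (Dpt r0 (t k)) alpha)|].
    apply rel_maxpow_ge_terminal; auto.
Qed.

End LowerBound.

Lemma segment_point_ratio s q p lam g : 0 <= lam <= 1 -> 0 < g ->
  p = (fst s + lam * (fst q - fst s), snd s + lam * (snd q - snd s)) ->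
  Dpt s p = Dpt s q / (1 + g) -> Dpt p q = g * Dpt s p.
Proof.
  intros Hlam Hg -> Hsp. destruct (Dpt_on_segment s q lam Hlam) as [E1 E2].
  rewrite E2, Hsp. rewrite E1 in Hsp.
  replace ((1 - lam) * Dpt s q) with (Dpt s q - lam * Dpt s q) by ring.
  rewrite Hsp. field. lra.
Qed.

Theorem lemma4 (n : nat) (s : pt) (t : nat -> pt) (Ps N0 gamma alpha : R) (r0 : pt) :
  (1 <= n)%nat ->
  (forall k, (k < n)%nat -> t k <> s) ->
  (forall i j, (i < n)%nat -> (j < n)%nat -> i <> j -> t i <> t j) ->
  (forall i j, (i <= j)%nat -> (j < n)%nat -> Dpt s (t i) <= Dpt s (t j)) ->
  0 < Ps -> 0 < N0 -> 0 < gamma -> 2 <= alpha ->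
  (exists lam, 0 <= lam <= 1 /\
     r0 = (fst s + lam * (fst (t (n-1)%nat) - fst s),
           snd s + lam * (snd (t (n-1)%nat) - snd s))) ->
  Dpt s r0 = Dpt s (t (n-1)%nat) / (1 + Rpower gamma (1 / alpha)) ->
  (forall k, (k < n)%nat -> t k <> r0) ->
  (forall k, (k < n)%nat ->
     Dpt s (t k) <= Dpt s r0 \/ Dpt r0 (t k) <= Dpt r0 (t (n-1)%nat)) ->
  forall (r : pt), r <> s -> (forall k, (k < n)%nat -> r <> t k) ->
  forall (PS : bool -> list bool -> R) (PR : list bool -> R),
    feasible n Ps (gamma * Ps) PS PR ->
    exists (PS0 : bool -> list bool -> R) (PR0 : list bool -> R),
      feasible n Ps (gamma * Ps) PS0 PR0 /\
      R_sT n s t r N0 alpha PS PR <= R_sT n s t r0 N0 alpha PS0 PR0.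
Proof.
  intros Hn Hts _ _ HPs HN0 Hgam Ha [lam [Hlam Hr0]] Hsr0 Htr Hcov r Hrs _ PS PR Hf.
  set (g := Rpower gamma (1 / alpha)) in *.
  assert (Hg : 0 < g) by apply Rpower_pos.
  assert (Hgg : Rpower g alpha = gamma).
  { unfold g. rewrite Rpower_mult. replace (1 / alpha * alpha) with 1 by (field; lra).
    apply Rpower_1; auto. }
  assert (Hlast : (n - 1 < n)%nat) by lia.
  assert (Hsr : 0 < Dpt s r0).
  { rewrite Hsr0. apply Rdiv_lt_0_compat; [|lra]. apply Dpt_pos, not_eq_sym, Hts, Hlast. }
  assert (Hrho : Rpower (Dpt r0 (t (n - 1)%nat)) alpha = gamma * Rpower (Dpt s r0) alpha).
  { rewrite (segment_point_ratio s (t (n - 1)%nat) r0 lam g), <- Rpower_mult_distr, Hgg; auto. }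
  exists (src_point (true, near_mask n s t r0) Ps),
         (rel_point (far_mask n s t r0) (gamma * Ps)).
  split; [apply point_feasible; nra|].
  eapply Rle_trans.
  - apply (rate_upper_bound n s t r Ps N0 g alpha PS PR (n - 1)%nat); auto; [lra|].
    rewrite Hgg. exact Hf.
  - rewrite <- Hsr0. apply (rate_lower_bound n s t r0 alpha (Dpt r0 (t (n - 1)%nat))); auto; lra.
Qed.
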